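(* Let $p,q,e$ be positive integers and $\mathbf{C}=\begin{bmatrix}1 & p\\ q & 1+pq\end{bmatrix}$. The least period of the Cat map over $\mathbb{Z}_{2^e}$ is $T$ if and only if $T$ is the minimum positive integer $n$ satisfying $$\tfrac12 G_n\equiv 1 \pmod{2^e}\quad\text{and}\quad H_n\equiv 0\pmod{2^{e-h_e}},$$ where $$h_e=\begin{cases}-1 & \text{if } e_p+e_q=0;\\ \min(e_p,e_q) & \text{if } e>\min(e_p,e_q),\ e_p+e_q\ne 0;\\ e & \text{if } e\le \min(e_p,e_q),\end{cases}$$ $e_p=\max\{x: 2^x\mid p\}$ and $e_q=\max\{x: 2^x\mid q\}$.
   Context: The Cat map over $\mathbb{Z}_{2^e}$ is $v\mapsto \mathbf{C}v\bmod 2^e$ on $\mathbb{Z}_{2^e}^2$; its least period is the least positive integer $n$ with $\mathbf{C}^nv\equiv v\pmod{2^e}$ for all $v$. Put $A=pq+2$, $B=\sqrt{A^2-4}$, $G_n=\left(\frac{A+B}{2}\right)^n+\left(\frac{A-B}{2}\right)^n$, $H_n=\frac{1}{B}\left(\left(\frac{A+B}{2}\right)^n-\left(\frac{A-B}{2}\right)^n\right)$ (integers). The congruence $\frac12 G_n\equiv 1\pmod{2^e}$ is understood to require that $\frac12 G_n$ be an integer. *)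

From mathcomp Require Import all_boot all_order all_algebra.
Set Implicit Arguments. Unset Strict Implicit. Unset Printing Implicit Defensive.
Import GRing.Theory.
Local Open Scope ring_scope.

Definition catC (m p q : nat) : 'M['Z_m]_2 :=
  \matrix_(i < 2, j < 2)
    if (i : nat) == 0%N then (if (j : nat) == 0%N then 1 else p%:R)
    else (if (j : nat) == 0%N then q%:R else (1 + p * q)%N%:R).

Definition cat_fixes (m p q n : nat) : Prop :=
  forall v : 'cV['Z_m]_2, (catC m p q ^+ n) *m v = v.

Definition is_least_pos (P : nat -> Prop) (T : nat) : Prop :=
  (0 < T)%N /\ P T /\ forall n, (0 < n)%N -> P n -> (T <= n)%N.

Definition cat_least_period (e p q T : nat) : Prop :=
  is_least_pos (cat_fixes (2 ^ e) p q) T.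

Fixpoint lucas_pair (A x0 x1 : int) (n : nat) : int * int :=
  match n with
  | 0%N => (x0, x1)
  | n'.+1 => lucas_pair A x1 (A * x1 - x0) n'
  end.

Definition catA (p q : nat) : int := (p * q + 2)%N%:Z.

(* G_n = alpha^n + beta^n, H_n = (alpha^n - beta^n)/B, alpha,beta = (A +- B)/2
   roots of x^2 - A x + 1 *)
Definition Gn (p q n : nat) : int := (lucas_pair (catA p q) 2 (catA p q) n).1.
Definition Hn (p q n : nat) : int := (lucas_pair (catA p q) 0 1 n).1.

Definition h_exp (e p q : nat) : int :=
  let ep := logn 2 p in let eq := logn 2 q in
  if (ep + eq == 0)%N then -1
  else if (minn ep eq < e)%N then (minn ep eq)%:Z
  else e%:Z.

Definition GH_cond (e p q n : nat) : Prop :=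
  [/\ (2 %| Gn p q n)%Z,
      ((Gn p q n %/ 2)%Z = 1 %[mod (2 ^ e)%N%:Z])%Z &
      (Hn p q n = 0 %[mod (2 ^ `|e%:Z - h_exp e p q|)%N%:Z])%Z].

From mathcomp Require Import all_boot all_order all_algebra.
From mathcomp Require Import ring zify.

Set Implicit Arguments.
Unset Strict Implicit.
Unset Printing Implicit Defensive.
Import GRing.Theory.
Local Open Scope ring_scope.

(* Since C has trace A = pq + 2 and determinant 1, C^n = H_n C - H_(n-1) I, so
   C^n = I over Z_(2^e) iff 2^e divides H_n - H_(n-1) - 1, p H_n and q H_n, i.e.
   iff 2^e | H_n - H_(n-1) - 1 and 2^(e - min(e_p, e_q)) | H_n (truncated
   subtraction).  On the other side G_n = pq H_n + 2 (H_n - H_(n-1)), and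
   2^(e - h_e) | H_n always forces 2^(e+1) | pq H_n, so the condition on G_n and
   H_n says 2^e | H_n - H_(n-1) - 1 and 2^(e - h_e) | H_n.  The two exponents
   agree unless p and q are both odd (h_e = -1); then the Cassini identity
   (H_n - H_(n-1))^2 - pq H_n H_(n-1) = 1 read modulo 2^(e+1), with pq H_(n-1)
   odd, upgrades 2^e | H_n to 2^(e+1) | H_n. *)

Lemma lucas_pairS A x0 x1 n :
  lucas_pair A x0 x1 n.+1 =
  ((lucas_pair A x0 x1 n).2, A * (lucas_pair A x0 x1 n).2 - (lucas_pair A x0 x1 n).1).
Proof. by elim: n x0 x1 => [|n IHn] x0 x1 //; exact: IHn. Qed.

Lemma HnSS p q n : Hn p q n.+2 = catA p q * Hn p q n.+1 - Hn p q n.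
Proof. by rewrite /Hn !lucas_pairS. Qed.

Lemma GnSS p q n : Gn p q n.+2 = catA p q * Gn p q n.+1 - Gn p q n.
Proof. by rewrite /Gn !lucas_pairS. Qed.

Lemma GnS_Hn p q n : Gn p q n.+1 = catA p q * Hn p q n.+1 - 2 * Hn p q n.
Proof.
suff [] : Gn p q n.+1 = catA p q * Hn p q n.+1 - 2 * Hn p q n /\
          Gn p q n.+2 = catA p q * Hn p q n.+2 - 2 * Hn p q n.+1 by [].
elim: n => [|n [IH1 IH2]]; first by rewrite GnSS HnSS /Gn /Hn /=; split; ring.
by split => //; rewrite GnSS IH1 IH2 !HnSS; ring.
Qed.

Lemma Hn_cassini p q n :
  Hn p q n.+1 ^+ 2 - catA p q * Hn p q n.+1 * Hn p q n + Hn p q n ^+ 2 = 1.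
Proof.
elim: n => [|n IHn]; first by rewrite /Hn /=; ring.
by rewrite HnSS -IHn; ring.
Qed.

Lemma catAE p q : catA p q = p%:Z * q%:Z + 2.
Proof. by rewrite /catA PoszD PoszM. Qed.

Lemma exprS_quadratic (R : pzRingType) (V : lalgType R) (x : V) (A : int)
    (x2 : x ^+ 2 = A%:~R *: x - 1) n :
  x ^+ n.+1 = (lucas_pair A 0 1 n).2%:~R *: x - (lucas_pair A 0 1 n).1%:~R *: 1.
Proof.
elim: n => [|n IHn]; first by rewrite expr1 /= scale1r scale0r subr0.
rewrite lucas_pairS /= exprSr IHn mulrBl -!scalerAl mul1r -expr2 x2.
by rewrite scalerBr scalerA -intrM mulrC intrB scalerBl addrAC.
Qed.

Lemma catC_sqr m p q : catC m p q ^+ 2 = (catA p q)%:~R *: catC m p q - 1.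
Proof.
apply/matrixP => i j; rewrite !mxE !big_ord_recl big_ord0 !mxE /= /catA.
rewrite pmulrn !natrD !natrM.
by case: i => [[|[|//]] ?]; case: j => [[|[|//]] ?] /=; ring.
Qed.

Lemma catC_expS m p q n :
  catC m p q ^+ n.+1 = (Hn p q n.+1)%:~R *: catC m p q - (Hn p q n)%:~R *: 1.
Proof. by rewrite (exprS_quadratic (catC_sqr m p q)) /Hn lucas_pairS. Qed.

Lemma mulmx_fixes_all (R : pzSemiRingType) k (M : 'M[R]_k) :
  (forall v : 'cV_k, M *m v = v) <-> M = 1%:M.
Proof.
split=> [Mfix | -> v]; last exact: mul1mx.
apply/matrixP => i j; have /matrixP/(_ i 0) := Mfix (delta_mx j 0).
by rewrite -colE !mxE eqxx andbT.
Qed.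

Lemma Zp_intr_eq0 m (x : int) : (1 < m)%N -> ((x%:~R : 'Z_m) == 0) = (m%:Z %| x)%Z.
Proof.
move=> m_gt1; rewrite dvdzE /=.
have natr_eq0 k : ((k%:R : 'Z_m) == 0) = (m %| k)%N.
  by rewrite -val_eqE /= val_Zp_nat.
by case: x => k; rewrite ?NegzE ?mulrNz ?oppr_eq0 natr_eq0.
Qed.

Lemma catC_expS_eq1 m p q n : (1 < m)%N ->
  (catC m p q ^+ n.+1 == 1) =
  [&& (m%:Z %| Hn p q n.+1 - Hn p q n - 1)%Z, (m%:Z %| p%:Z * Hn p q n.+1)%Z
    & (m%:Z %| q%:Z * Hn p q n.+1)%Z].
Proof.
move=> m_gt1; rewrite -!Zp_intr_eq0 // !intrD !intrM !intrN mulr1z -!pmulrn.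
rewrite catC_expS; set x := (Hn p q n.+1)%:~R; set y := (Hn p q n)%:~R.
apply/eqP/and3P => [/matrixP E | [/eqP E00 /eqP E01 /eqP E10]].
  have := E 0 0; have := E 0 1; have := E 1 0; rewrite !mxE /= !mulr0 !mulr1 !subr0.
  by move=> Eq Ep E1; rewrite !(mulrC _ x) Eq Ep E1 subrr eqxx.
apply/matrixP => i j; rewrite !mxE.
case: i => [[|[|//]] ?]; case: j => [[|[|//]] ?] /=; rewrite ?mulr0 ?mulr1 ?subr0.
- by apply/eqP; rewrite -subr_eq0 E00.
- by rewrite mulrC E01.
- by rewrite mulrC E10.
- have -> : x * (1 + p * q)%N%:R - y = (x - y - 1) + p%:R * x * q%:R + 1.
    by rewrite natrD natrM; ring.
  by rewrite E00 E01 mul0r !add0r.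
Qed.

Lemma dvdz_pow2_natmul k p (u : int) : (0 < p)%N ->
  ((2 ^ k)%N%:Z %| p%:Z * u)%Z = ((2 ^ (k - logn 2 p))%N%:Z %| u)%Z.
Proof.
move=> p_gt0; rewrite !dvdzE abszM /=.
have [-> | u_neq0] := eqVneq `|u|%N 0%N; first by rewrite muln0 !dvdn0.
have u_gt0 : (0 < `|u|)%N by rewrite lt0n.
by rewrite !pfactor_dvdn ?muln_gt0 ?p_gt0 // lognM // leq_subLR.
Qed.

Lemma dvdz_pow2W a b (u : int) : (a <= b)%N ->
  ((2 ^ b)%N%:Z %| u)%Z -> ((2 ^ a)%N%:Z %| u)%Z.
Proof. by move=> ab; rewrite !dvdzE; apply: dvdn_trans; exact: dvdn_exp2l. Qed.

Lemma dvdz_pow2_max a b (u : int) :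
  ((2 ^ a)%N%:Z %| u)%Z && ((2 ^ b)%N%:Z %| u)%Z = ((2 ^ maxn a b)%N%:Z %| u)%Z.
Proof.
wlog ab : a b / (a <= b)%N.
  by move=> W; case/orP: (leq_total a b) => ?; [|rewrite andbC maxnC]; exact: W.
by rewrite (maxn_idPr ab); apply/andb_idl; exact: dvdz_pow2W.
Qed.

Lemma cat_fixesS e p q n : (0 < e)%N -> (0 < p)%N -> (0 < q)%N ->
  cat_fixes (2 ^ e) p q n.+1 <->
  ((2 ^ e)%N%:Z %| Hn p q n.+1 - Hn p q n - 1)%Z &&
  ((2 ^ (e - minn (logn 2 p) (logn 2 q)))%N%:Z %| Hn p q n.+1)%Z.
Proof.
move=> e_gt0 p_gt0 q_gt0; have m_gt1 : (1 < 2 ^ e)%N by rewrite -{1}(expn0 2) ltn_exp2l.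
have -> : (e - minn (logn 2 p) (logn 2 q) = maxn (e - logn 2 p) (e - logn 2 q))%N by lia.
rewrite -dvdz_pow2_max -!dvdz_pow2_natmul // -catC_expS_eq1 //.
rewrite /cat_fixes mulmx_fixes_all; exact: (rwP eqP).
Qed.

Lemma half_eq1_mod e (t s : int) : ((2 ^ e.+1)%N%:Z %| t)%Z ->
  (2 %| (t + 2 * s))%Z && (((t + 2 * s) %/ 2)%Z == 1 %[mod (2 ^ e)%N%:Z])%Z =
  ((2 ^ e)%N%:Z %| s - 1)%Z.
Proof.
case/dvdzP => k ->; rewrite expnS PoszM.
have -> : k * (2 * (2 ^ e)%N%:Z) + 2 * s = 2 * (k * (2 ^ e)%N%:Z + s) by ring.
by rewrite mulKz // dvdz_mulr ?dvdzz // eqz_mod_dvd -addrA rpredDl ?dvdz_mull.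
Qed.

Lemma absz_sub_h_exp e p q : `|e%:Z - h_exp e p q|%N =
  if (logn 2 p + logn 2 q == 0)%N then e.+1 else (e - minn (logn 2 p) (logn 2 q))%N.
Proof. by rewrite /h_exp; do 2?case: ifP => ?; lia. Qed.

Lemma GH_condS e p q n : (0 < e)%N -> (0 < p)%N -> (0 < q)%N ->
  GH_cond e p q n.+1 <->
  ((2 ^ e)%N%:Z %| Hn p q n.+1 - Hn p q n - 1)%Z &&
  ((2 ^ `|e%:Z - h_exp e p q|)%N%:Z %| Hn p q n.+1)%Z.
Proof.
move=> e_gt0 p_gt0 q_gt0; set d := `|_ - _|%N; set u := Hn p q n.+1; set w := Hn p q n.
have pqu_dvd : ((2 ^ d)%N%:Z %| u)%Z -> ((2 ^ e.+1)%N%:Z %| p%:Z * (q%:Z * u))%Z.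
  move=> Hd; apply: (@dvdz_pow2W _ (logn 2 p + (logn 2 q + d))).
    by rewrite /d absz_sub_h_exp; case: ifP => ?; lia.
  by rewrite !dvdz_pow2_natmul // !addKn.
have GE : Gn p q n.+1 = p%:Z * (q%:Z * u) + 2 * (u - w) by rewrite GnS_Hn catAE; ring.
have modE (x : int) (M : nat) : (x = 0 %[mod M%:Z])%Z <-> (M%:Z %| x)%Z.
  by rewrite -[X in (_ %| X)%Z]subr0 -eqz_mod_dvd; exact: (rwP eqP).
rewrite /GH_cond GE; split => [[G2 Gm /modE Hd] | /andP[Hs Hd]].
  by rewrite -(half_eq1_mod _ (pqu_dvd Hd)) G2 Gm eqxx Hd.
have /andP[G2 /eqP Gm] := etrans (half_eq1_mod _ (pqu_dvd Hd)) Hs.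
by split=> //; exact/modE.
Qed.

Lemma dvdz_pow2S_cassini e (a u w : int) : (0 < e)%N -> ~~ (2 %| a)%Z ->
  (u - w) ^+ 2 - a * u * w = 1 ->
  ((2 ^ e)%N%:Z %| u - w - 1)%Z -> ((2 ^ e)%N%:Z %| u)%Z -> ((2 ^ e.+1)%N%:Z %| u)%Z.
Proof.
case: e => // e _ a_odd cassini uw_dvd u_dvd.
have two_dvd_pow : (2 %| (2 ^ e.+1)%N%:Z)%Z by rewrite dvdzE /= dvdn_exp.
have w_odd : ~~ (2 %| w)%Z.
  apply/negP => w_even.
  have u_even : (2 %| u)%Z := dvdz_trans two_dvd_pow u_dvd.
  have := rpredB (rpredB u_even w_even) (dvdz_trans two_dvd_pow uw_dvd).
  by have -> : u - w - (u - w - 1) = 1 by ring.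
have cop : coprimez (2 ^ e.+2)%N%:Z (a * w).
  rewrite coprimezE /= coprime_pexpl // prime_coprime // abszM Euclid_dvdM //.
  by move: a_odd w_odd; rewrite negb_or !dvdzE => -> ->.
rewrite -(Gauss_dvdzl _ cop).
case/dvdzP: uw_dvd => j uwE.
have -> : u * (a * w) = (u - w) ^+ 2 - 1 by rewrite -cassini; ring.
have -> : u - w = j * (2 ^ e.+1)%N%:Z + 1 by rewrite -uwE; ring.
apply/dvdzP; exists (j * (j * (2 ^ e)%N%:Z + 1)).
by rewrite !expnS !PoszM; ring.
Qed.

Lemma dvdz_HnS_h_exp e p q n : (0 < e)%N -> (0 < p)%N -> (0 < q)%N ->
  ((2 ^ e)%N%:Z %| Hn p q n.+1 - Hn p q n - 1)%Z ->
  ((2 ^ (e - minn (logn 2 p) (logn 2 q)))%N%:Z %| Hn p q n.+1)%Z =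
  ((2 ^ `|e%:Z - h_exp e p q|)%N%:Z %| Hn p q n.+1)%Z.
Proof.
move=> e_gt0 p_gt0 q_gt0 uw_dvd; rewrite absz_sub_h_exp.
case: ifP => [/eqP/eqP | //]; rewrite addn_eq0 => /andP[/eqP vp0 /eqP vq0].
rewrite vp0 vq0 minnn subn0; apply/idP/idP => [u_dvd | ]; last exact: dvdz_pow2W.
have odd_of_logn0 k : (0 < k)%N -> logn 2 k = 0%N -> ~~ (2 %| k)%N.
  by move=> k_gt0 vk0; rewrite -[2%N]expn1 pfactor_dvdn // vk0.
apply: (@dvdz_pow2S_cassini _ (p%:Z * q%:Z)) uw_dvd u_dvd => //.
  by rewrite dvdzE abszM /= Euclid_dvdM // negb_or !odd_of_logn0.
by rewrite -(Hn_cassini p q n) catAE; ring.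
Qed.

Lemma eq_is_least_pos (P Q : nat -> Prop) T :
  (forall n, (0 < n)%N -> P n <-> Q n) -> is_least_pos P T <-> is_least_pos Q T.
Proof.
move=> PQ; split=> [[T_gt0 [PT T_min]] | [T_gt0 [QT T_min]]]; do !split => //.
- exact/PQ.
- by move=> n n_gt0 /(PQ n n_gt0); exact: T_min.
- exact/PQ.
- by move=> n n_gt0 /(PQ n n_gt0); exact: T_min.
Qed.

Theorem proposition3 (p q e : nat) :
  (0 < p)%N -> (0 < q)%N -> (0 < e)%N ->
  forall T : nat,
    cat_least_period e p q T <-> is_least_pos (GH_cond e p q) T.
Proof.
move=> p_gt0 q_gt0 e_gt0 T; apply: eq_is_least_pos => -[//|n] _.
rewrite cat_fixesS // GH_condS //.
by case: (boolP (_ %| Hn p q n.+1 - Hn p q n - 1)%Z) => //= /dvdz_HnS_h_exp ->.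
Qed.
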